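(* Let $q$ be a prime power, let $\mathcal{F}=(\mathcal{F}_1,\ldots,\mathcal{F}_r)$ be a flag on $\mathbb{F}_{q^n}$ and let $\beta\in\mathbb{F}_{q^n}^*$. The following are equivalent: (1) $\mathrm{Orb}_\beta(\mathcal{F})$ is a disjoint flag code; (2) $\mathrm{Stab}_\beta(\mathcal{F})=\mathrm{Stab}_\beta(\mathcal{F}_1)=\cdots=\mathrm{Stab}_\beta(\mathcal{F}_r)$; (3) $\mathrm{Stab}_\beta(\mathcal{F}_1)=\cdots=\mathrm{Stab}_\beta(\mathcal{F}_r)$.
   Context: A flag on $\mathbb{F}_{q^n}$ is a sequence $(\mathcal{F}_1,\ldots,\mathcal{F}_r)$ of $\mathbb{F}_q$-subspaces with $\{0\}\subsetneq\mathcal{F}_1\subsetneq\cdots\subsetneq\mathcal{F}_r\subsetneq\mathbb{F}_{q^n}$. For $\beta\in\mathbb{F}_{q^n}^*$ of multiplicative order $|\beta|$, $\mathcal{U}\beta=\{u\beta:u\in\mathcal{U}\}$, $\mathcal{F}\beta=(\mathcal{F}_1\beta,\ldots,\mathcal{F}_r\beta)$, $\mathrm{Orb}_\beta(\mathcal{F})=\{\mathcal{F}\beta^j:0\le j\le|\beta|-1\}$, $\mathrm{Stab}_\beta(\mathcal{U})=\{\gamma\in\langle\beta\rangle:\mathcal{U}\gamma=\mathcal{U}\}$ and $\mathrm{Stab}_\beta(\mathcal{F})=\{\gamma\in\langle\beta\rangle:\mathcal{F}\gamma=\mathcal{F}\}$. For a set $\mathcal{C}$ of flags of type $(t_1,\ldots,t_r)$,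 its $i$-th projected code $\mathcal{C}_i$ is the set of $i$-th subspaces of its flags; $\mathcal{C}$ is disjoint if $|\mathcal{C}_1|=\cdots=|\mathcal{C}_r|=|\mathcal{C}|$. *)

From HB Require Import structures.
From mathcomp Require Import all_boot all_order all_algebra all_fingroup all_field.
Set Implicit Arguments. Unset Strict Implicit. Unset Printing Implicit Defensive.
Import GRing.Theory.
Local Open Scope ring_scope.

(* F_q is an arbitrary finite field F (q := #|F|, automatically a prime power);
   F_{q^n} is a finite field extension L of F (n := \dim {:L}); we use the
   alias finvect_type L, which carries the canonical finFieldType structure,
   so that the multiplicative group {unit _} is a finGroupType. *)

Section Flags.
Variables (F : finFieldType) (L : fieldExtType F).
Local Notation fL := (finvect_type L).

Definition vsmul (U : {vspace fL}) (b : fL) : {vspace fL} := (amulr b @: U)%VS.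

Definition vsproper (U V : {vspace fL}) : bool := (U <= V)%VS && (U != V).

Definition is_flag (s : seq {vspace fL}) : bool :=
  match s with
  | [::] => true
  | U :: _ => [&& vsproper 0%VS U, sorted vsproper s & vsproper (last U s) fullv]
  end.

Definition flagmul (s : seq {vspace fL}) (b : fL) : seq {vspace fL} :=
  [seq vsmul U b | U <- s].

Definition orbit_flag (s : seq {vspace fL}) (b : {unit fL}) : seq (seq {vspace fL}) :=
  [seq flagmul s (val (b ^+ j)%g) | j <- iota 0 #[b]%g].

(* i-th projected code (0-indexed) of a list of flags *)
Definition proj_code (C : seq (seq {vspace fL})) (i : nat) : seq {vspace fL} :=
  [seq nth 0%VS f i | f <- C].

Definition disjoint_code (r : nat) (C : seq (seq {vspace fL})) : Prop :=
  forall i, (i < r)%N -> size (undup (proj_code C i)) = size (undup C).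

Definition stab_vs (b : {unit fL}) (U : {vspace fL}) : {set {unit fL}} :=
  [set g in <[b]>%g | vsmul U (val g) == U].

Definition stab_flag (b : {unit fL}) (s : seq {vspace fL}) : {set {unit fL}} :=
  [set g in <[b]>%g | flagmul s (val g) == s].

End Flags.

From mathcomp Require Import all_boot all_order all_algebra all_fingroup all_field.
Set Implicit Arguments. Unset Strict Implicit. Unset Printing Implicit Defensive.
Import GRing.Theory.
Local Open Scope ring_scope.

(* The projection of Orb_b(F) onto its i-th subspaces has as many elements as
   the orbit itself iff F_i g = F_i h forces F g = F h on <[b]>, i.e. iff
   Stab_b(F_i) <= Stab_b(F).  As Stab_b(F) is the intersection of the
   Stab_b(F_i), the code is disjoint iff all Stab_b(F_i) equal Stab_b(F), which
   gives (1) <-> (2) <-> (3). *)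

Section UndupMap.
Variables (T1 T2 : eqType) (f : T1 -> T2).

Lemma uniq_map_in_injP (s : seq T1) :
  uniq s -> reflect {in s &, injective f} (uniq (map f s)).
Proof.
move=> s_uniq; apply: (iffP idP) => [fs_uniq x y xs ys fxy | /map_inj_in_uniq ->//].
suff eq_idx : index x s = index y s.
  by rewrite -[LHS](nth_index x xs) -[RHS](nth_index x ys) eq_idx.
apply/eqP; rewrite -(nth_uniq (f x) _ _ fs_uniq) ?size_map ?index_mem //.
by rewrite !(nth_map x (f x)) ?index_mem // !nth_index ?fxy.
Qed.

Lemma size_undup_mapP (s : seq T1) :
  reflect {in s &, injective f} (size (undup (map f s)) == size (undup s)).
Proof.
have ->: size (undup (map f s)) = size (undup (map f (undup s))).
  by apply/perm_size/perm_undup/eq_mem_map => z; rewrite mem_undup.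
have ->: (size (undup (map f (undup s))) == size (undup s)) = uniq (map f (undup s)).
  by rewrite -(size_map f) eqn_leq size_undup leqNgt ltn_size_undup negbK.
apply: (iffP (uniq_map_in_injP (undup_uniq s))) => inj x y;
  [rewrite -!(mem_undup s) | rewrite !mem_undup]; exact: inj.
Qed.

End UndupMap.

Section FlagStabilizers.
Variables (F : finFieldType) (L : fieldExtType F).
Local Notation fL := (finvect_type L).
Implicit Types (U : {vspace fL}) (s : seq {vspace fL}) (b g h : {unit fL}).

Lemma vsmul1 U : vsmul U 1 = U.
Proof.
rewrite /vsmul (_ : amulr 1 = \1%VF) ?lim1g //.
by apply/lfunP => v; rewrite !lfunE /= mulr1.
Qed.

Lemma vsmulM U (x y : fL) : vsmul (vsmul U x) y = vsmul U (x * y).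
Proof.
rewrite /vsmul -limg_comp; congr (_ @: _)%VS.
by apply/lfunP => v; rewrite comp_lfunE !lfunE /= mulrA.
Qed.

Lemma vsmul0 (x : fL) : vsmul 0 x = 0%VS.
Proof. exact: limg0. Qed.

Lemma flagmul1 s : flagmul s 1 = s.
Proof. by rewrite /flagmul (eq_map vsmul1) map_id. Qed.

Lemma flagmulM s (x y : fL) : flagmul (flagmul s x) y = flagmul s (x * y).
Proof. by rewrite /flagmul -map_comp; apply: eq_map => U /=; rewrite vsmulM. Qed.

Lemma nth_flagmul s (x : fL) i :
  (i < size s)%N -> nth 0%VS (flagmul s x) i = vsmul (nth 0%VS s i) x.
Proof. exact: nth_map. Qed.

Lemma orbit_flagP s b X :
  reflect (exists2 g, g \in <[b]>%g & X = flagmul s (val g)) (X \in orbit_flag s b).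
Proof.
apply: (iffP mapP) => [[j _ ->] | [_ /cycleP[m ->] ->]].
  by exists (b ^+ j)%g; rewrite ?mem_cycle.
exists (m %% #[b]%g)%N; last by rewrite expg_mod_order.
by rewrite mem_iota add0n ltn_pmod ?order_gt0.
Qed.

Lemma stab_vs0 b : stab_vs b 0 = <[b]>%g.
Proof. by apply/setP => g; rewrite inE vsmul0 eqxx andbT. Qed.

Lemma stab_flag_nil b : stab_flag b [::] = <[b]>%g.
Proof. by apply/setP => g; rewrite inE eqxx andbT. Qed.

Lemma stab_flag_sub_stab_vs b s i :
  (i < size s)%N -> stab_flag b s \subset stab_vs b (nth 0%VS s i).
Proof.
move=> lt_i; apply/subsetP => g; rewrite !inE => /andP[-> /eqP gs] /=.
by rewrite -nth_flagmul // gs.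
Qed.

Lemma vsmul_unitM U g h : vsmul U (val (g * h)%g) = vsmul (vsmul U (val g)) (val h).
Proof. by rewrite vsmulM FinRing.val_unitM. Qed.

Lemma flagmul_unitM s g h :
  flagmul s (val (g * h)%g) = flagmul (flagmul s (val g)) (val h).
Proof. by rewrite flagmulM FinRing.val_unitM. Qed.

Lemma orbit_flag_refl s b : s \in orbit_flag s b.
Proof. by apply/orbit_flagP; exists 1%g; rewrite ?group1 // FinRing.val_unit1 flagmul1. Qed.

Lemma orbit_flag_nth_injP b s i : (i < size s)%N ->
  reflect {in orbit_flag s b &, injective (fun X => nth 0%VS X i)}
          (stab_vs b (nth 0%VS s i) \subset stab_flag b s).
Proof.
move=> lt_i; apply: (iffP idP) => [stab_sub | inj_i].
  move=> _ _ /orbit_flagP[g gb ->] /orbit_flagP[h hb ->].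
  rewrite !nth_flagmul // => gh_i.
  have gh_stab : (g * h^-1)%g \in stab_vs b (nth 0%VS s i).
    rewrite inE groupM ?groupV // andTb vsmul_unitM gh_i -vsmul_unitM mulgV.
    by rewrite FinRing.val_unit1 vsmul1.
  have := subsetP stab_sub _ gh_stab; rewrite inE => /andP[_ /eqP s_gh].
  by rewrite -(mulgKV h g) flagmul_unitM s_gh.
apply/subsetP => g; rewrite !inE => /andP[gb /eqP g_i]; rewrite gb /=.
apply/eqP/inj_i; [by apply/orbit_flagP; exists g | exact: orbit_flag_refl |].
by rewrite nth_flagmul.
Qed.

Lemma disjoint_orbit_flagP b s :
  disjoint_code (size s) (orbit_flag s b) <->
  (forall i, (i < size s)%N -> stab_vs b (nth 0%VS s i) \subset stab_flag b s).
Proof.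
split=> disj i lt_i; first by apply/(orbit_flag_nth_injP b lt_i)/size_undup_mapP/eqP/disj.
by apply/eqP/size_undup_mapP/(orbit_flag_nth_injP b lt_i)/disj.
Qed.

Lemma stab_vs_sub_stab_flagE b s i : (i < size s)%N ->
  (stab_vs b (nth 0%VS s i) \subset stab_flag b s) =
  (stab_vs b (nth 0%VS s i) == stab_flag b s).
Proof. by move=> lt_i; rewrite eqEsubset (stab_flag_sub_stab_vs _ lt_i) andbT. Qed.

Lemma stab_flag_eq_stab_vs0 b s :
  (forall i, (i < size s)%N -> stab_vs b (nth 0%VS s i) = stab_vs b (nth 0%VS s 0)) ->
  stab_flag b s = stab_vs b (nth 0%VS s 0).
Proof.
case: s => [_ | U s eq_stab]; first by rewrite stab_flag_nil stab_vs0.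
apply/eqP; rewrite eqEsubset stab_flag_sub_stab_vs //=; apply/subsetP => g gU.
have gb : g \in <[b]>%g by move: gU; rewrite inE => /andP[].
rewrite inE gb; apply/eqP/(@eq_from_nth _ 0%VS) => [|i]; rewrite size_map // => lt_i.
by move: gU; rewrite nth_flagmul // -(eq_stab i lt_i) inE => /andP[_ /eqP].
Qed.

End FlagStabilizers.

Theorem proposition4p18 (F : finFieldType) (L : fieldExtType F)
  (s : seq {vspace finvect_type L}) (b : {unit finvect_type L}) :
  is_flag s ->
  let r := size s in
  let stabi := fun i => stab_vs b (nth 0%VS s i) in
  (disjoint_code r (orbit_flag s b) <->
     (stab_flag b s = stabi 0%N /\ forall i, (i < r)%N -> stabi i = stabi 0%N)) /\
  ((stab_flag b s = stabi 0%N /\ forall i, (i < r)%N -> stabi i = stabi 0%N) <->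
     (forall i, (i < r)%N -> stabi i = stabi 0%N)).
Proof.
move=> _ r stabi.
have stab_conds_equiv : (stab_flag b s = stabi 0%N /\ forall i, (i < r)%N -> stabi i = stabi 0%N) <->
               (forall i, (i < r)%N -> stabi i = stabi 0%N).
  by split=> [[] // | eq_stab]; split=> //; apply: stab_flag_eq_stab_vs0.
split=> //.
apply: iff_trans (disjoint_orbit_flagP b s) (iff_trans _ (iff_sym stab_conds_equiv)).
split=> stab_sub i lt_i.
- have eq_flag k : (k < r)%N -> stabi k = stab_flag b s.
    by move=> lt_k; apply/eqP; rewrite -stab_vs_sub_stab_flagE ?stab_sub.
  by rewrite !eq_flag // (leq_ltn_trans _ lt_i).
- rewrite stab_vs_sub_stab_flagE // -/(stabi i) stab_sub //.
  by rewrite (stab_flag_eq_stab_vs0 stab_sub).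
Qed.
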